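(* The singular locus of $O$ has ten irreducible components. The component $S_{(x_0,x_1)}$ is given by $$x_0-x_1=0,\qquad x_2^2+x_3^2+x_4^2-2x_2x_3-2x_2x_4-2x_3x_4=0$$ (and $w=0$), and the other nine components $S_{(x_i,x_j)}$, $0\le i<j\le4$, are obtained from it by permuting the coordinates $x_0,\ldots,x_4$.
   Context: Let $$\Delta'(x_0,\ldots,x_4):=\prod_{i_1,\ldots,i_4\in\{0,1\}}\big(\sqrt{x_0}+(-1)^{i_1}\sqrt{x_1}+(-1)^{i_2}\sqrt{x_2}+(-1)^{i_3}\sqrt{x_3}+(-1)^{i_4}\sqrt{x_4}\big)\in\mathbb{Q}[x_0,\ldots,x_4],$$ a symmetric form of degree $8$. $O$ is the double covering $\pi:O\to\mathbf{P}^4_{\mathbb{Q}}$ given by $w^2=(-3)\Delta'(x_0,\ldots,x_4)$, i.e. the hypersurface with this equation in the weighted projective space $\mathbf{P}(4,1,1,1,1,1)$ with coordinates $w,x_0,\ldots,x_4$, with $\pi$ the projection to $(x_0:\ldots:x_4)$. *)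

From HB Require Import structures.
From mathcomp Require Import all_boot all_order all_algebra all_field.
From mathcomp Require Import mpoly.
Set Implicit Arguments. Unset Strict Implicit. Unset Printing Implicit Defensive.
Import Order.TTheory GRing.Theory Num.Theory.
Local Open Scope ring_scope.

(* Points of the affine 6-space algC^6 with coordinates (w, x_0, ..., x_4):
   coordinate ord0 is w, coordinate (lift ord0 i) is x_i. *)
Definition pt6 := 'I_6 -> algC.

(* P(y_0,..,y_4) = prod over sign choices of (y_0 +- y_1 +- y_2 +- y_3 +- y_4);
   Delta' is the polynomial with Delta'(y_0^2,...,y_4^2) = P(y). *)
Definition Psigned : {mpoly algC[5]} :=
  \prod_(e : {ffun 'I_4 -> bool})
     ('X_ord0 + \sum_(k < 4) ((-1) ^+ e k) *: 'X_(lift ord0 k)).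

Definition squares5 : 5.-tuple {mpoly algC[5]} := [tuple 'X_i ^+ 2 | i < 5].

(* D is Delta' exactly when  D \mPo squares5 = Psigned  (this characterizes
   Delta' uniquely). *)
Definition is_Delta' (D : {mpoly algC[5]}) : Prop := D \mPo squares5 = Psigned.

Definition xvars : 5.-tuple {mpoly algC[6]} := [tuple 'X_(lift ord0 i) | i < 5].

Definition Oeq (D : {mpoly algC[5]}) : {mpoly algC[6]} :=
  'X_ord0 ^+ 2 - (-3) *: (D \mPo xvars).

(* Affine cone (in algC^6) over the singular locus of O:
   the points where the equation and all its partial derivatives vanish.
   (It contains the vertex 0.) *)
Definition SingCone (D : {mpoly algC[5]}) (v : pt6) : Prop :=
  (Oeq D).@[v] = 0 /\ forall k : 'I_6, ((Oeq D)^`M(k)).@[v] = 0.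

Definition xc (v : pt6) (i : 'I_5) : algC := v (lift ord0 i).

Definition Scomp (i j : 'I_5) (v : pt6) : Prop :=
  v ord0 = 0 /\ xc v i = xc v j /\
  \sum_(t < 5 | (t != i) && (t != j)) xc v t ^+ 2
  - 2 * \sum_(s < 5 | (s != i) && (s != j))
          \sum_(t < 5 | [&& (s < t)%N, t != i & t != j]) xc v s * xc v t = 0.

Definition zclosed (n : nat) (A : ('I_n -> algC) -> Prop) : Prop :=
  exists S : {mpoly algC[n]} -> Prop,
    forall v, A v <-> (forall p, S p -> p.@[v] = 0).

Definition zirreducible (n : nat) (A : ('I_n -> algC) -> Prop) : Prop :=
  (exists v, A v) /\
  forall Z1 Z2 : ('I_n -> algC) -> Prop, zclosed Z1 -> zclosed Z2 ->
    (forall v, A v -> Z1 v \/ Z2 v) ->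
    (forall v, A v -> Z1 v) \/ (forall v, A v -> Z2 v).

From HB Require Import structures.
From mathcomp Require Import all_boot all_order all_algebra all_field.
From mathcomp Require Import mpoly ring.
From Stdlib Require Import Classical.
Set Implicit Arguments. Unset Strict Implicit. Unset Printing Implicit Defensive.
Import Order.TTheory GRing.Theory Num.Theory.
Local Open Scope ring_scope.

(* Put x_k = y_k^2.  Then Delta'(x) = P(y) is the product of the 16 linear forms
   L_e(y) = y_0 +- y_1 +- ... +- y_4, and by the chain rule a singular point of O
   (w = 0, and Delta' vanishes to order two at x) has a square root y at which every
   first partial of P vanishes, as does the pure second partial along any zero
   coordinate of y.  If only one L_e vanished at y, its partial along y_0 would not;
   so two sign vectors s, t annihilate y.  Comparing the two relations shows that
   either y_i = +-y_j while the other three coordinates have a vanishing signed sum,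
   which squares to the equation of S_(x_i,x_j), or s and t differ in a single
   coordinate a with y_a = 0; then the second partial along y_a forces a third
   vanishing form, and the same comparison concludes.
   Conversely S_(x_i,x_j) is parametrised by (r, s, t) |-> (r^2, r^2, s^2, t^2, (s+t)^2)
   (in the coordinates i, j and the remaining three), and at the root
   (r, r, s, t, -(s+t)) two forms vanish, three if a coordinate is zero, so these
   points are singular.  As a polynomial image of affine space S_(x_i,x_j) is
   irreducible, and the point (0, 0, 1, 4, 9) lies on no other component. *)

Section MpolyDeriv.
Variables (R : comNzRingType) (n : nat).
Implicit Types (p q r s : {mpoly R[n]}) (y : 'I_n -> R).

Lemma sumr_delta (F : 'I_n -> R) (k : 'I_n) :
  \sum_(j < n) (j == k)%:R * F j = F k.
Proof.
rewrite (bigD1 k) //= eqxx mul1r big1 ?addr0 // => j /negbTE ->.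
by rewrite mul0r.
Qed.

Lemma mderivXU (i j : 'I_n) : ('X_j : {mpoly R[n]})^`M(i) = (j == i)%:R%:MP.
Proof.
rewrite mderivX mnm1E; case: eqP => [->|_]; last by rewrite scale0r mpolyC0.
have -> : (U_(i) - U_(i))%MM = 0%MM by apply/mnmP => l; rewrite mnmBE mnm0E subnn.
by rewrite mpolyX0 scale1r mpolyC1.
Qed.

Lemma mderiv_comp (k : nat) (lq : n.-tuple {mpoly R[k]}) (i : 'I_k) p :
  (p \mPo lq)^`M(i) = \sum_(j < n) (p^`M(j) \mPo lq) * (tnth lq j)^`M(i).
Proof.
pose chain p := (p \mPo lq)^`M(i) = \sum_(j < n) (p^`M(j) \mPo lq) * (tnth lq j)^`M(i).
have chainD p1 p2 : chain p1 -> chain p2 -> chain (p1 + p2).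
  rewrite /chain comp_mpolyD mderivD => -> ->; rewrite -big_split /=.
  by apply: eq_bigr => j _; rewrite mderivD comp_mpolyD mulrDl.
have chainZ c p1 : chain p1 -> chain (c *: p1).
  rewrite /chain comp_mpolyZ mderivZ => ->; rewrite scaler_sumr.
  by apply: eq_bigr => j _; rewrite mderivZ comp_mpolyZ scalerAl.
have chainM p1 p2 : chain p1 -> chain p2 -> chain (p1 * p2).
  rewrite /chain rmorphM /= mderivM => -> ->.
  rewrite mulr_suml mulr_sumr -big_split /=.
  apply: eq_bigr => j _; rewrite mderivM comp_mpolyD !rmorphM /=; ring.
have chain1 : chain 1.
  rewrite /chain comp_mpoly1 -mpolyC1 mderivC big1 // => j _.
  by rewrite mderivC comp_mpoly0 mul0r.
have chainX j : chain 'X_j.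
  rewrite /chain comp_mpolyXU (bigD1 j) //= big1 => [|j' hj'].
    by rewrite mderivXU eqxx comp_mpolyC mpolyC1 mul1r addr0 -tnth_nth.
  by rewrite mderivXU eq_sym (negbTE hj') mpolyC0 comp_mpoly0 mul0r.
have chainXm m : chain 'X_[m].
  rewrite mpolyXE_id; apply: (big_ind chain) => // j _.
  by elim: (m j) => [|e ih]; rewrite ?expr0 // exprS; apply: chainM.
elim/mpolyind: p => [|c m p _ _ ih].
  rewrite /chain comp_mpoly0 mderiv0 big1 // => j _.
  by rewrite mderiv0 comp_mpoly0 mul0r.
by apply: chainD => //; apply: chainZ.
Qed.

Lemma meval_mderiv_sqrX y (j k : 'I_n) :
  (('X_j ^+ 2 : {mpoly R[n]})^`M(k)).@[y] = (j == k)%:R * (2 * y j).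
Proof. by rewrite expr2 mderivM mderivXU mevalD !mevalM mevalC mevalXU; ring. Qed.

Lemma meval_mderiv2_sqrX y (j k : 'I_n) :
  (('X_j ^+ 2 : {mpoly R[n]})^`M(k)^`M(k)).@[y] = (j == k)%:R * 2.
Proof.
rewrite expr2 mderivM mderivD !mderivM !mderivXU !mderivC.
by rewrite !(mevalD, mevalM, mevalC, mevalXU); case: (j == k); rewrite /= ?mulr1n ?mulr0n; ring.
Qed.

Lemma meval_mderivM_eq0 y b p q :
  p.@[y] = 0 -> q.@[y] = 0 -> ((p * q)^`M(b)).@[y] = 0.
Proof. by move=> hp hq; rewrite mderivM mevalD !mevalM hp hq; ring. Qed.

Lemma meval_mderiv2M3_eq0 y b p q r s : p.@[y] = 0 -> q.@[y] = 0 -> r.@[y] = 0 ->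
  ((p * (q * (r * s)))^`M(b)^`M(b)).@[y] = 0.
Proof. by move=> hp hq hr; rewrite !(mderivM, mderivD, mevalD, mevalM, hp, hq, hr); ring. Qed.

Lemma meval_mderiv2M2 y b p q r (c d : R) : p^`M(b) = c%:MP -> q^`M(b) = d%:MP ->
  p.@[y] = 0 -> q.@[y] = 0 -> ((p * (q * r))^`M(b)^`M(b)).@[y] = 2 * (c * d) * r.@[y].
Proof.
move=> dp dq hp hq; rewrite !(mderivM, mderivD, dp, dq, mderivC).
by rewrite !(mevalD, mevalM, mevalC, hp, hq, meval0); ring.
Qed.

End MpolyDeriv.

Lemma sum_ord_pair (V : nmodType) (n : nat) (G : 'I_n -> V) (i j : 'I_n) : i != j ->
  \sum_k G k = G i + G j + \sum_(k < n | (k != i) && (k != j)) G k.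
Proof.
move=> hij; rewrite (bigD1 i) //= (bigD1 j) 1?eq_sym //= addrA.
by congr (_ + _ + _); apply: eq_bigl => k; rewrite andbC.
Qed.

Section SignedSums.
Variable R : numDomainType.
Implicit Types (x : R) (y s t z : 'I_5 -> R).

Lemma sqr_eq1_cases x : x ^+ 2 = 1 -> x = 1 \/ x = -1.
Proof. by move/eqP; rewrite sqrf_eq1 => /orP[]/eqP; [left|right]. Qed.

Lemma sqr_eq1_neq0 x : x ^+ 2 = 1 -> x != 0.
Proof. by apply: contra_eqN => /eqP ->; rewrite expr0n eq_sym oner_eq0. Qed.

Lemma oppr1_neq1 : (-1 : R) != 1.
Proof. by rewrite eq_sym -addr_eq0 -mulr2n pnatr_eq0. Qed.

(* [y] is a square root of a point of [S_(x_i,x_j)]: [y_i = +-y_j] and the three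
   remaining coordinates have a signed sum equal to zero. *)
Definition over_comp y := exists (i j : 'I_5) z,
  [/\ (i < j)%N, forall k, z k ^+ 2 = y k ^+ 2, z i ^+ 2 = z j ^+ 2 &
      \sum_(k < 5 | (k != i) && (k != j)) z k = 0].

Lemma over_compP y (i j : 'I_5) z : i != j ->
  (forall k, z k ^+ 2 = y k ^+ 2) -> z i ^+ 2 = z j ^+ 2 ->
  \sum_(k < 5 | (k != i) && (k != j)) z k = 0 -> over_comp y.
Proof.
move=> hij hz hzij hs; case: (ltngtP i j) => [lt|gt|/val_inj eq]; last by rewrite eq eqxx in hij.
  by exists i, j, z.
exists j, i, z; split=> //.
by rewrite -[RHS]hs; apply: eq_bigl => k /=; rewrite andbC.
Qed.

Lemma over_comp_of_sums y z (i j : 'I_5) : i != j ->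
  (forall k, z k ^+ 2 = y k ^+ 2) -> \sum_k z k = 0 ->
  \sum_(k < 5 | (k != i) && (k != j)) z k = 0 -> over_comp y.
Proof.
move=> hij hz hall hs; apply: (over_compP hij hz) => //.
move: hall; rewrite (sum_ord_pair _ hij) hs addr0 => /eqP; rewrite addr_eq0 => /eqP ->.
by rewrite sqrrN.
Qed.

Lemma over_comp_of_zeros y s (a b : 'I_5) : a != b -> (forall k, s k ^+ 2 = 1) ->
  \sum_k s k * y k = 0 -> y a = 0 -> y b = 0 -> over_comp y.
Proof.
move=> hab hs hsum ha hb; apply: (@over_comp_of_sums y (fun k => s k * y k) a b) => //.
  by move=> k; rewrite exprMn hs mul1r.
by move: hsum; rewrite (sum_ord_pair _ hab) ha hb !mulr0 !add0r.
Qed.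

Definition flipv (a : 'I_5) s k := if k == a then - s k else s k.

Section TwoSignedSums.
Variables (y s t : 'I_5 -> R).
Hypotheses (hs : forall k, s k ^+ 2 = 1) (ht : forall k, t k ^+ 2 = 1).
Hypotheses (hsy : \sum_k s k * y k = 0) (hty : \sum_k t k * y k = 0).
Hypotheses (t_neq_s : exists k, t k != s k) (t_neq_Ns : exists k, t k != - s k).

Let A := [set k | s k == t k].
Let z k := s k * y k.

Let t_notin_A k : k \notin A -> t k = - s k.
Proof.
rewrite inE => hk; case: (sqr_eq1_cases (hs k)) => e1; case: (sqr_eq1_cases (ht k)) => e2;
  by move: hk; rewrite e1 e2 ?eqxx ?opprK.
Qed.

(* [sum s y] and [sum t y] are [Sum_A z + Sum_(~A) z] and [Sum_A z - Sum_(~A) z]. *)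
Let sum_A_eq0 : \sum_(k in A) z k = 0 /\ \sum_(k in ~: A) z k = 0.
Proof.
have eD : \sum_(k in A) z k + \sum_(k in ~: A) z k = 0.
  by rewrite -[RHS]hsy [RHS](bigID (mem A)) /=; congr (_ + _); apply: eq_bigl => k; rewrite inE.
have eB : \sum_(k in A) z k - \sum_(k in ~: A) z k = 0.
  rewrite -[RHS]hty [RHS](bigID (mem A)) /= -sumrN; congr (_ + _); apply: eq_big => k.
  - by [].
  - by rewrite inE => /eqP <-.
  - by rewrite inE.
  - by rewrite inE => /t_notin_A ->; rewrite /z mulNr.
have : 2 * \sum_(k in A) z k =
    (\sum_(k in A) z k + \sum_(k in ~: A) z k) + (\sum_(k in A) z k - \sum_(k in ~: A) z k).
  by ring.
rewrite eD eB addr0 => /eqP; rewrite mulf_eq0 pnatr_eq0 /= => /eqP e1; split=> //.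
by move: eD; rewrite e1 add0r.
Qed.

Let card2_over_comp (X : {set 'I_5}) : #|X| = 2%N -> \sum_(k in ~: X) z k = 0 -> over_comp y.
Proof.
move/eqP/cards2P => [i [j [hij ->]]] hs0.
have hz k : z k ^+ 2 = y k ^+ 2 by rewrite /z exprMn hs mul1r.
apply: (over_comp_of_sums hij hz hsy).
by rewrite -[RHS]hs0; apply: eq_bigl => k /=; rewrite !inE negb_or.
Qed.

Let card1_zero (X : {set 'I_5}) : #|X| = 1%N -> \sum_(k in X) z k = 0 ->
  exists a, X = [set a] /\ y a = 0.
Proof.
move/eqP/cards1P => [a ->]; rewrite big_set1 /z => /eqP; rewrite mulf_eq0.
by rewrite (negbTE (sqr_eq1_neq0 (hs a))) /= => /eqP ha; exists a.
Qed.

Lemma two_signed_sums_eq0 : over_comp y \/ exists a, y a = 0 /\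
   ((forall k, t k = flipv a s k) \/ (forall k, t k = - flipv a s k)).
Proof.
have [sA sCA] := sum_A_eq0.
have A_gt0 : (0 < #|A|)%N.
  case: t_neq_Ns => k hk; apply/card_gt0P; exists k; apply: contraR hk => /t_notin_A ->.
  by rewrite eqxx.
have A_lt5 : (#|A| < 5)%N.
  rewrite -[X in (_ < X)%N](card_ord 5) -cardsT; apply: proper_card; rewrite properT.
  apply/eqP => AT; case: t_neq_s => k; have : k \in A by rewrite AT inE.
  by rewrite inE eq_sym => ->.
have cardCA : #|~: A| = (5 - #|A|)%N.
  by apply/eqP; rewrite -(eqn_add2l #|A|) cardsC card_ord subnKC // ltnW.
case hAn : #|A| A_gt0 A_lt5 => [|[|[|[|[|n]]]]] // _ _; rewrite hAn in cardCA.
- right; have [a [Aa ya]] := card1_zero hAn sA; exists a; split=> //; right => k.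
  rewrite /flipv; case: eqP => [->|/eqP ka].
    by move: (set11 a); rewrite -Aa inE => /eqP <-; rewrite opprK.
  by rewrite t_notin_A // Aa inE.
- by left; apply: (card2_over_comp hAn sCA).
- by left; apply: (card2_over_comp cardCA); rewrite setCK.
- right; have [a [CAa ya]] := card1_zero cardCA sCA; exists a; split=> //; left => k.
  rewrite /flipv; case: eqP => [->|/eqP ka]; first by rewrite t_notin_A // -in_setC CAa set11.
  have : k \in A by rewrite -[A]setCK CAa !inE.
  by rewrite inE => /eqP.
Qed.

End TwoSignedSums.
End SignedSums.

Definition sqrv (n : nat) (y : 'I_n -> algC) (k : 'I_n) := y k ^+ 2.

Lemma meval_comp_squares (D : {mpoly algC[5]}) y :
  (D \mPo squares5).@[y] = D.@[sqrv y].
Proof.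
rewrite comp_mpoly_meval; apply: meval_eq => i.
by rewrite /squares5 tnth_mktuple rmorphXn /= mevalXU.
Qed.

Lemma meval_mderiv_comp_squares (D : {mpoly algC[5]}) y k :
  ((D \mPo squares5)^`M(k)).@[y] = 2 * y k * (D^`M(k)).@[sqrv y].
Proof.
rewrite mderiv_comp (raddf_sum (meval y)) /=.
rewrite -(sumr_delta (fun j => 2 * y j * (D^`M(j)).@[sqrv y])).
apply: eq_bigr => j _; rewrite mevalM meval_comp_squares /squares5 tnth_mktuple.
by rewrite meval_mderiv_sqrX; case: eqP => [->|_]; rewrite /= ?mulr1n ?mulr0n; ring.
Qed.

(* The term [4 y_k^2 (d_k d_k D)(y^2)] of the second derivative vanishes when [y k = 0]. *)
Lemma meval_mderiv2_comp_squares (D : {mpoly algC[5]}) y k : y k = 0 ->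
  ((D \mPo squares5)^`M(k)^`M(k)).@[y] = 2 * (D^`M(k)).@[sqrv y].
Proof.
move=> yk0; rewrite mderiv_comp (raddf_sum (mderiv k)) (raddf_sum (meval y)) /=.
rewrite -(sumr_delta (fun j => 2 * (D^`M(j)).@[sqrv y])); apply: eq_bigr => j _.
rewrite mderivM mevalD !mevalM meval_comp_squares /squares5 tnth_mktuple.
rewrite meval_mderiv_sqrX meval_mderiv2_sqrX.
by case: eqP => [->|_]; rewrite ?yk0 /= ?mulr1n ?mulr0n; ring.
Qed.

Lemma meval_comp_xvars (D : {mpoly algC[5]}) (v : pt6) :
  (D \mPo xvars).@[v] = D.@[xc v].
Proof.
rewrite comp_mpoly_meval; apply: meval_eq => i.
by rewrite /xvars tnth_mktuple mevalXU.
Qed.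

Lemma meval_Oeq D v : (Oeq D).@[v] = v ord0 ^+ 2 + 3 * D.@[xc v].
Proof. by rewrite /Oeq mevalB mevalZ rmorphXn /= mevalXU meval_comp_xvars; ring. Qed.

Lemma meval_mderiv_Oeq D v k : ((Oeq D)^`M(k)).@[v] =
  (ord0 == k)%:R * (2 * v ord0) +
  3 * \sum_(j < 5) (lift ord0 j == k)%:R * (D^`M(j)).@[xc v].
Proof.
rewrite /Oeq mderivB mderivZ mevalB mevalZ meval_mderiv_sqrX mderiv_comp.
rewrite (raddf_sum (meval v)) mulNr opprK; congr (_ + 3 * _); apply: eq_bigr => j _ /=.
by rewrite mevalM meval_comp_xvars /xvars tnth_mktuple mderivXU mevalC mulrC.
Qed.

Lemma SingConeE D v : SingCone D v <->
  [/\ v ord0 = 0, D.@[xc v] = 0 & forall i, (D^`M(i)).@[xc v] = 0].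
Proof.
have n2 : (2 : algC) != 0 by rewrite pnatr_eq0.
have n3 : (3 : algC) != 0 by rewrite pnatr_eq0.
split=> [[hO hd]|[v0 hD hd]]; last first.
  split=> [|k]; first by rewrite meval_Oeq v0 hD; ring.
  by rewrite meval_mderiv_Oeq v0 big1 ?mulr0 ?addr0 // => j _; rewrite hd mulr0.
have v0 : v ord0 = 0.
  move: (hd ord0); rewrite meval_mderiv_Oeq eqxx big1 => [|j _]; last first.
    by rewrite eq_sym (negbTE (neq_lift _ _)) mul0r.
  by rewrite mulr0 addr0 mul1r => /eqP; rewrite mulf_eq0 (negbTE n2) => /eqP.
split=> // [|i].
  by move: hO; rewrite meval_Oeq v0 expr0n add0r => /eqP; rewrite mulf_eq0 (negbTE n3) => /eqP.
move: (hd (lift ord0 i)); rewrite meval_mderiv_Oeq (negbTE (neq_lift _ _)) mul0r add0r.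
under eq_bigr => j _ do rewrite (inj_eq (@lift_inj _ ord0)).
by rewrite sumr_delta => /eqP; rewrite mulf_eq0 (negbTE n3) => /eqP.
Qed.

Definition sgnpat := {ffun 'I_4 -> bool}.

Definition sgnv (e : sgnpat) (a : 'I_5) : algC :=
  if unlift ord0 a is Some k then (-1) ^+ e k else 1.

Definition Lform (e : sgnpat) : {mpoly algC[5]} :=
  'X_ord0 + \sum_(k < 4) ((-1) ^+ e k) *: 'X_(lift ord0 k).

Definition lval (e : sgnpat) (y : 'I_5 -> algC) := \sum_a sgnv e a * y a.

Lemma PsignedE : Psigned = \prod_(e : sgnpat) Lform e.
Proof. by []. Qed.

Lemma LformE e : Lform e = \sum_a sgnv e a *: 'X_a.
Proof.
rewrite big_ord_recl /sgnv unlift_none scale1r; congr (_ + _).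
by apply: eq_bigr => k _; rewrite liftK.
Qed.

Lemma meval_Lform e y : (Lform e).@[y] = lval e y.
Proof.
rewrite LformE (raddf_sum (meval y)); apply: eq_bigr => a _ /=.
by rewrite mevalZ mevalXU.
Qed.

Lemma mderiv_Lform e b : (Lform e)^`M(b) = (sgnv e b)%:MP.
Proof.
rewrite LformE (raddf_sum (mderiv b)) -(sumr_delta (sgnv e)) rmorph_sum /=.
by apply: eq_bigr => a _; rewrite mderivZ mderivXU -mul_mpolyC -rmorphM mulrC.
Qed.

Lemma sgnv_sqr e a : sgnv e a ^+ 2 = 1.
Proof. by rewrite /sgnv; case: unlift => [k|]; rewrite ?expr1n // sqrr_sign. Qed.

Lemma sgnv_neq0 e a : sgnv e a != 0.
Proof. exact: sqr_eq1_neq0 (sgnv_sqr e a). Qed.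

Lemma sgnv0 e : sgnv e ord0 = 1.
Proof. by rewrite /sgnv unlift_none. Qed.

Lemma sgnv_lift e k : sgnv e (lift ord0 k) = (-1) ^+ e k.
Proof. by rewrite /sgnv liftK. Qed.

Lemma sgnv_inj e e' : sgnv e =1 sgnv e' -> e = e'.
Proof. by move=> h; apply/ffunP => k; apply: (@signr_inj algC); rewrite -!sgnv_lift h. Qed.

Lemma sgnv_neq e e' : e != e' -> exists k, sgnv e k != sgnv e' k.
Proof.
move=> ne; apply/existsP; apply: contraNT ne => /existsPn e_eq.
by apply/eqP/sgnv_inj => k; apply/eqP/negPn/e_eq.
Qed.

Lemma sgnv_neqN e e' : exists k, sgnv e k != - sgnv e' k.
Proof. by exists ord0; rewrite !sgnv0 eq_sym (oppr1_neq1 _). Qed.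

Lemma sgnv_eqN e e' : ~ (forall k, sgnv e k = - sgnv e' k).
Proof. by move/(_ ord0)/eqP; rewrite !sgnv0 eq_sym (negbTE (oppr1_neq1 _)). Qed.

Lemma meval_Psigned y : Psigned.@[y] = \prod_(e : sgnpat) lval e y.
Proof. by rewrite PsignedE rmorph_prod; apply: eq_bigr => e _; apply: meval_Lform. Qed.

Lemma meval_mderiv_Psigned_eq0 y b e1 e2 : e1 != e2 ->
  lval e1 y = 0 -> lval e2 y = 0 -> (Psigned^`M(b)).@[y] = 0.
Proof.
rewrite -!meval_Lform => ne h1 h2.
rewrite PsignedE (bigD1 e1) //= (bigD1 e2) /= ?(eq_sym e2) ?ne //.
by apply: meval_mderivM_eq0; rewrite // mevalM h2 mul0r.
Qed.

Lemma meval_mderiv2_Psigned_eq0 y b e1 e2 e3 : e1 != e2 -> e1 != e3 -> e2 != e3 ->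
  lval e1 y = 0 -> lval e2 y = 0 -> lval e3 y = 0 -> (Psigned^`M(b)^`M(b)).@[y] = 0.
Proof.
move=> n12 n13 n23; rewrite -!meval_Lform => h1 h2 h3.
rewrite PsignedE (bigD1 e1) //= (bigD1 e2) /= ?(eq_sym e2) ?n12 //.
rewrite (bigD1 e3) /= ?(eq_sym e3) ?n13 ?n23 //.
exact: meval_mderiv2M3_eq0.
Qed.

Lemma meval_mderiv_Psigned_neq0 y b e0 : lval e0 y = 0 ->
  (forall e, e != e0 -> lval e y != 0) -> (Psigned^`M(b)).@[y] != 0.
Proof.
move=> h0 hne; rewrite PsignedE (bigD1 e0) //= mderivM mevalD !mevalM meval_Lform h0.
rewrite mderiv_Lform mevalC mul0r addr0 mulf_neq0 ?sgnv_neq0 // rmorph_prod /=.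
by apply/prodf_neq0 => e he; rewrite meval_Lform; apply: hne.
Qed.

Lemma meval_mderiv2_Psigned_neq0 y b e1 e2 : e1 != e2 -> lval e1 y = 0 -> lval e2 y = 0 ->
  (forall e, e != e1 -> e != e2 -> lval e y != 0) -> (Psigned^`M(b)^`M(b)).@[y] != 0.
Proof.
move=> ne h1 h2 hne; rewrite PsignedE (bigD1 e1) //= (bigD1 e2) /= ?(eq_sym e2) ?ne //.
rewrite (meval_mderiv2M2 _ (mderiv_Lform e1 b) (mderiv_Lform e2 b)) ?meval_Lform //.
rewrite !mulf_neq0 ?sgnv_neq0 ?pnatr_eq0 // rmorph_prod /=.
by apply/prodf_neq0 => e /andP[he1 he2]; rewrite meval_Lform; apply: hne.
Qed.

Section SingularToComponent.
Variables (D : {mpoly algC[5]}) (hD : is_Delta' D) (v : pt6).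
Hypotheses (hD0 : D.@[xc v] = 0) (hdD : forall i, (D^`M(i)).@[xc v] = 0).

Let y k := sqrtC (xc v k).

Let meval_sqrv p : p.@[sqrv y] = p.@[xc v].
Proof. by apply: meval_eq => k; rewrite /sqrv /y sqrtCK. Qed.

Let Psigned_mderiv b : (Psigned^`M(b)).@[y] = 0.
Proof. by rewrite -hD meval_mderiv_comp_squares meval_sqrv hdD mulr0. Qed.

Let Psigned_mderiv2 b : y b = 0 -> (Psigned^`M(b)^`M(b)).@[y] = 0.
Proof. by move=> yb0; rewrite -hD meval_mderiv2_comp_squares // meval_sqrv hdD mulr0. Qed.

Lemma over_comp_sqrt : over_comp y.
Proof.
have /eqP/prodf_eq0 [e0 _ /eqP h0] : \prod_(e : sgnpat) lval e y = 0.
  by rewrite -meval_Psigned -hD meval_comp_squares meval_sqrv.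
have [e1 /andP[n10 /eqP h1]] : exists e1, (e1 != e0) && (lval e1 y == 0).
  apply/existsP; apply: contraT; rewrite negb_exists => /forallP hn.
  move: (meval_mderiv_Psigned_neq0 ord0 h0); rewrite Psigned_mderiv eqxx; apply=> e ne0.
  by move: (hn e); rewrite ne0.
have [//|[a [ya t1]]] := two_signed_sums_eq0 (@sgnv_sqr e0) (@sgnv_sqr e1) h0 h1
  (sgnv_neq n10) (sgnv_neqN e1 e0).
have n01 : e0 != e1 by rewrite eq_sym.
have [e2 /and3P[n20 n21 /eqP h2]] : exists e2, [&& e2 != e0, e2 != e1 & lval e2 y == 0].
  apply/existsP; apply: contraT; rewrite negb_exists => /forallP hn.
  move: (meval_mderiv2_Psigned_neq0 a n01 h0 h1); rewrite Psigned_mderiv2 // eqxx.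
  by apply=> e ne0 ne1; move: (hn e); rewrite ne0 ne1.
have [//|[a' [ya' t2]]] := two_signed_sums_eq0 (@sgnv_sqr e0) (@sgnv_sqr e2) h0 h2
  (sgnv_neq n20) (sgnv_neqN e2 e0).
have [eaa|naa] := eqVneq a a'; last exact: (over_comp_of_zeros naa (@sgnv_sqr e0) h0 ya ya').
subst a'.
(* [e1] and [e2] would both be [e0] flipped at [a], up to a global sign fixed by [sgnv0]. *)
exfalso; case: t1 => t1; case: t2 => t2.
- by move/eqP: n21; apply; apply: sgnv_inj => k; rewrite t1 t2.
- by apply: (@sgnv_eqN e2 e1) => k; rewrite t1 t2.
- by apply: (@sgnv_eqN e2 e1) => k; rewrite t1 t2 opprK.
- by move/eqP: n21; apply; apply: sgnv_inj => k; rewrite t1 t2.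
Qed.

End SingularToComponent.

(* An enumeration of ['I_5] that [vm_compute] can evaluate, unlike [ord_enum 5]. *)
Definition ord5 : seq 'I_5 :=
  [:: @Ordinal 5 0 isT; @Ordinal 5 1 isT; @Ordinal 5 2 isT; @Ordinal 5 3 isT; @Ordinal 5 4 isT].

Lemma mem_ord5 i : i \in ord5.
Proof. by case: i => [[|[|[|[|[|k]]]]] hk]. Qed.

Lemma perm_ord5 : perm_eq (index_enum 'I_5) ord5.
Proof. by apply: uniq_perm; rewrite ?index_enum_uniq // => k; rewrite mem_index_enum mem_ord5. Qed.

Definition rest (i j : 'I_5) : seq 'I_5 := [seq k <- ord5 | (k != i) && (k != j)].
Definition rest_a i j := nth ord0 (rest i j) 0.
Definition rest_b i j := nth ord0 (rest i j) 1.
Definition rest_c i j := nth ord0 (rest i j) 2.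

Definition rest_spec (i j : 'I_5) :=
  let a := rest_a i j in let b := rest_b i j in let c := rest_c i j in
  [&& rest i j == [:: a; b; c], (a < b < c)%N,
      all (fun k => (k != i) && (k != j)) [:: a; b; c] &
      all (fun k => k \in [:: i; j; a; b; c]) ord5].

Lemma rest_specP i j : i != j -> rest_spec i j.
Proof.
have : all (fun i => all (fun j => (i != j) ==> rest_spec i j) ord5) ord5.
  by vm_compute.
by move=> /allP /(_ i (mem_ord5 i)) /allP /(_ j (mem_ord5 j)) /implyP.
Qed.

Definition pvec (T : Type) (i j : 'I_5) (A B C E : T) (k : 'I_5) : T :=
  if (k == i) || (k == j) then A else if k == rest_a i j then B
  else if k == rest_b i j then C else E.

Lemma pvec_map (T U : Type) (f : T -> U) i j A B C E k :
  f (pvec i j A B C E k) = pvec i j (f A) (f B) (f C) (f E) k.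
Proof. by rewrite /pvec; do 3?case: ifP. Qed.

Definition param (R : nzRingType) (i j : 'I_5) (r s t : R) : 'I_6 -> R :=
  fun k => if unlift ord0 k is Some k' then
     pvec i j (r ^+ 2) (s ^+ 2) (t ^+ 2) ((s + t) ^+ 2) k' else 0.

Lemma xc_param i j (r s t : algC) k :
  xc (param i j r s t) k = pvec i j (r ^+ 2) (s ^+ 2) (t ^+ 2) ((s + t) ^+ 2) k.
Proof. by rewrite /xc /param liftK. Qed.

Lemma quad_factor (R : comNzRingType) (s t u : R) :
  s ^+ 2 ^+ 2 + t ^+ 2 ^+ 2 + u ^+ 2 ^+ 2
    - 2 * (s ^+ 2 * t ^+ 2 + s ^+ 2 * u ^+ 2 + t ^+ 2 * u ^+ 2)
  = (s + t + u) * (s + t - u) * (s - t + u) * (s - t - u).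
Proof. by ring. Qed.

(* The sign pattern of a [+-1] vector, normalised to have sign [+] at index 0. *)
Definition sgnpat_of (sg : 'I_5 -> algC) : sgnpat := [ffun k => sg (lift ord0 k) != sg ord0].

Section SignPatternOf.
Variables (sg : 'I_5 -> algC) (hsg : forall k, sg k ^+ 2 = 1).

Lemma sgnv_sgnpat_of k : sgnv (sgnpat_of sg) k = sg ord0 * sg k.
Proof.
case: (unliftP ord0 k) => [k'|] ->; last by rewrite sgnv0 -expr2 hsg.
rewrite sgnv_lift ffunE.
case: (sqr_eq1_cases (hsg ord0)) => ->; case: (sqr_eq1_cases (hsg (lift ord0 k'))) => ->;
  rewrite ?eqxx ?(negbTE (oppr1_neq1 _)) 1?eq_sym ?(negbTE (oppr1_neq1 _)) /=; ring.
Qed.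

Lemma lval_sgnpat_of y : lval (sgnpat_of sg) y = sg ord0 * \sum_k sg k * y k.
Proof. by rewrite mulr_sumr; apply: eq_bigr => k _; rewrite sgnv_sgnpat_of mulrA. Qed.

End SignPatternOf.

Lemma sgnpat_of_neq sg tg (hsg : forall k, sg k ^+ 2 = 1) (htg : forall k, tg k ^+ 2 = 1) k1 k2 :
  sg k1 != tg k1 -> sg k2 = tg k2 -> sgnpat_of sg != sgnpat_of tg.
Proof.
move=> d1 e2; apply/eqP => e.
have h k : sg ord0 * sg k = tg ord0 * tg k by rewrite -!sgnv_sgnpat_of // e.
have e0 : sg ord0 = tg ord0 by apply: (mulIf (sqr_eq1_neq0 (htg k2))); rewrite -{1}e2 h.
by move: (h k1); rewrite e0 => /(mulfI (sqr_eq1_neq0 (htg ord0)))/eqP; rewrite (negbTE d1).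
Qed.

Definition flips (l : seq 'I_5) (k : 'I_5) : algC := if k \in l then -1 else 1.

Lemma flips_sqr l k : flips l k ^+ 2 = 1.
Proof. by rewrite /flips; case: (k \in l); rewrite ?sqrrN expr1n. Qed.

Lemma sgnpat_flips_neq l1 l2 k1 k2 : (k1 \in l1) != (k1 \in l2) ->
  (k2 \in l1) = (k2 \in l2) -> sgnpat_of (flips l1) != sgnpat_of (flips l2).
Proof.
move=> d e; apply: (sgnpat_of_neq (flips_sqr l1) (flips_sqr l2) (k1 := k1) (k2 := k2)).
  by rewrite /flips; move: d; case: (k1 \in l1); case: (k1 \in l2) => //= _;
    rewrite ?oppr1_neq1 // eq_sym oppr1_neq1.
by rewrite /flips e.
Qed.

Section Complement.
Variables (i j : 'I_5) (hij : i != j).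
Let a := rest_a i j.
Let b := rest_b i j.
Let c := rest_c i j.

Let restE : rest i j = [:: a; b; c].
Proof. by case/and4P: (rest_specP hij) => /eqP. Qed.

Let lt_ab : (a < b)%N. Proof. by case/and4P: (rest_specP hij) => _ /andP[]. Qed.
Let lt_bc : (b < c)%N. Proof. by case/and4P: (rest_specP hij) => _ /andP[]. Qed.

Let neqs : ((i == j) = false) * ((j == i) = false) *
  ((a == i) = false) * ((i == a) = false) * ((a == j) = false) * ((j == a) = false) *
  ((b == i) = false) * ((i == b) = false) * ((b == j) = false) * ((j == b) = false) *
  ((c == i) = false) * ((i == c) = false) * ((c == j) = false) * ((j == c) = false) *
  ((a == b) = false) * ((b == a) = false) * ((a == c) = false) * ((c == a) = false) *
  ((b == c) = false) * ((c == b) = false).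
Proof.
case/and4P: (rest_specP hij) => _ _ /and4P[/andP[ai aj] /andP[bi bj] /andP[ci cj] _] _.
have lt_ac := ltn_trans lt_ab lt_bc.
by do !split; apply/negbTE;
  first [done | by rewrite eq_sym | by rewrite neq_ltn ?lt_ab ?lt_bc ?lt_ac ?orbT].
Qed.

Lemma ord5_cases (P : 'I_5 -> Prop) : P i -> P j -> P a -> P b -> P c -> forall k, P k.
Proof.
move=> Pi Pj Pa Pb Pc k; case/and4P: (rest_specP hij) => _ _ _ /allP /(_ k (mem_ord5 k)).
by rewrite !inE => /orP[|/or4P[]] /eqP ->.
Qed.

Lemma sum_rest (R : nmodType) (G : 'I_5 -> R) :
  \sum_(k < 5 | (k != i) && (k != j)) G k = G a + G b + G c.
Proof.
by rewrite (perm_big _ perm_ord5) -big_filter -/(rest i j) restE !big_cons big_nil /= addr0 addrA.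
Qed.

Let pvec_i (T : Type) (A B C E : T) : pvec i j A B C E i = A.
Proof. by rewrite /pvec -/a -/b -/c !(eqxx, neqs) ?orbT. Qed.
Let pvec_j (T : Type) (A B C E : T) : pvec i j A B C E j = A.
Proof. by rewrite /pvec -/a -/b -/c !(eqxx, neqs) ?orbT. Qed.
Let pvec_a (T : Type) (A B C E : T) : pvec i j A B C E a = B.
Proof. by rewrite /pvec -/a -/b -/c !(eqxx, neqs) ?orbT. Qed.
Let pvec_b (T : Type) (A B C E : T) : pvec i j A B C E b = C.
Proof. by rewrite /pvec -/a -/b -/c !(eqxx, neqs) ?orbT. Qed.
Let pvec_c (T : Type) (A B C E : T) : pvec i j A B C E c = E.
Proof. by rewrite /pvec -/a -/b -/c !(eqxx, neqs) ?orbT. Qed.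
Let pvecE := (pvec_i, pvec_j, pvec_a, pvec_b, pvec_c).

Lemma Scomp_quadE (R : comNzRingType) (x : 'I_5 -> R) :
  \sum_(t < 5 | (t != i) && (t != j)) x t ^+ 2
  - 2 * \sum_(s < 5 | (s != i) && (s != j))
          \sum_(t < 5 | [&& (s < t)%N, t != i & t != j]) x s * x t
  = x a ^+ 2 + x b ^+ 2 + x c ^+ 2 - 2 * (x a * x b + x a * x c + x b * x c).
Proof.
have inner (s : 'I_5) : \sum_(t < 5 | [&& (s < t)%N, t != i & t != j]) x s * x t =
    \sum_(t <- [:: a; b; c] | (s < t)%N) x s * x t.
  rewrite -restE big_filter_cond (perm_big _ perm_ord5) /=.
  by apply: eq_bigl => t; rewrite andbC.
have lt_ac := ltn_trans lt_ab lt_bc.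
rewrite !sum_rest !inner !big_cons !big_nil ltnn lt_ab lt_bc lt_ac.
by rewrite !ltnNge (ltnW lt_ab) (ltnW lt_bc) (ltnW lt_ac) !leqnn /=; ring.
Qed.

Lemma ScompP v : Scomp i j v <-> exists r s t, v =1 param i j r s t.
Proof.
split=> [[v0 [xij]]|[r [s [t hv]]]]; last first.
  have hx k : xc v k = pvec i j (r ^+ 2) (s ^+ 2) (t ^+ 2) ((s + t) ^+ 2) k.
    by rewrite /xc hv -/(xc _ _) xc_param.
  split; first by rewrite hv /param unlift_none.
  by rewrite Scomp_quadE !hx !pvecE; split=> //; ring.
pose x := xc v; rewrite Scomp_quadE -/x => hQ.
exists (sqrtC (x i)), (sqrtC (x a)).
(* with [x = u^2], the quadric factors into the four planes [+-u_a +- u_b +- u_c = 0] *)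
have [t [tb tc]] : exists t, t ^+ 2 = x b /\ (sqrtC (x a) + t) ^+ 2 = x c.
  set ua := sqrtC (x a); set ub := sqrtC (x b); set uc := sqrtC (x c).
  have [ea eb ec] : [/\ x a = ua ^+ 2, x b = ub ^+ 2 & x c = uc ^+ 2] by rewrite !sqrtCK.
  rewrite eb ec; move: hQ; rewrite ea eb ec quad_factor => /eqP.
  rewrite !mulf_eq0 !subr_eq0 -!orbA => /or4P[] /eqP h.
  - exists ub; split=> //.
    by rewrite -[uc ^+ 2]sqrrN; congr (_ ^+ 2); apply/eqP; rewrite -addr_eq0 h.
  - by exists ub; rewrite h.
  - exists (- ub); rewrite sqrrN; split=> //.
    by rewrite -[uc ^+ 2]sqrrN; congr (_ ^+ 2); apply/eqP; rewrite -addr_eq0 h.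
  - by exists (- ub); rewrite sqrrN h.
exists t => k; case: (unliftP ord0 k) => [k'|] ->; last by rewrite /param unlift_none.
rewrite /param liftK -/(xc v k') -/x; move: k'; apply: ord5_cases; rewrite !pvecE ?sqrtCK //.
Qed.

Section ComponentToSingular.
Variables (D : {mpoly algC[5]}) (hD : is_Delta' D) (r s t : algC) (v : pt6).
Hypothesis (hv : v =1 param i j r s t).

(* A square root of [xc v] on which two of the linear factors vanish. *)
Let y := pvec i j r s t (- (s + t)).

Let meval_sqrv p : p.@[sqrv y] = p.@[xc v].
Proof.
apply: meval_eq => k; rewrite /xc hv -/(xc _ _) xc_param /sqrv /y.
by move: k; apply: ord5_cases; rewrite !pvecE ?sqrrN.
Qed.

Let sum_y sg : \sum_k sg k * y k = sg i * r + sg j * r + sg a * s + sg b * t + sg c * (- (s + t)).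
Proof. by rewrite (sum_ord_pair _ hij) sum_rest /y !pvecE !addrA. Qed.

Let lval_flips l : \sum_k flips l k * y k = 0 -> lval (sgnpat_of (flips l)) y = 0.
Proof. by move=> h; rewrite lval_sgnpat_of ?h ?mulr0 //; apply: flips_sqr. Qed.

Lemma Scomp_SingCone : SingCone D v.
Proof.
pose e1 := sgnpat_of (flips [:: j]); pose e2 := sgnpat_of (flips [:: i]).
have Z1 : lval e1 y = 0 by apply: lval_flips; rewrite sum_y /flips !inE !(eqxx, neqs); ring.
have Z2 : lval e2 y = 0 by apply: lval_flips; rewrite sum_y /flips !inE !(eqxx, neqs); ring.
have n12 : e1 != e2 by apply: (@sgnpat_flips_neq _ _ i a); rewrite !inE !(eqxx, neqs).
apply/SingConeE; split=> [||k]; first by rewrite hv /param unlift_none.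
  rewrite -meval_sqrv -meval_comp_squares hD meval_Psigned.
  by apply/eqP/prodf_eq0; exists e1 => //; apply/eqP.
have [yk0|ykn0] := eqVneq (y k) 0; last first.
  have := meval_mderiv_comp_squares D y k; rewrite hD (meval_mderiv_Psigned_eq0 k n12 Z1 Z2).
  by rewrite meval_sqrv => /esym/eqP; rewrite !mulf_eq0 (negbTE ykn0) pnatr_eq0 orbF => /eqP.
(* at a zero coordinate of [y] a third factor vanishes *)
suff [e3 [Z3 n13 n23]] : exists e3, [/\ lval e3 y = 0, e1 != e3 & e2 != e3].
  have := meval_mderiv2_comp_squares D yk0; rewrite hD meval_sqrv.
  rewrite (meval_mderiv2_Psigned_eq0 k n12 n13 n23 Z1 Z2 Z3) => /esym/eqP.
  by rewrite mulf_eq0 pnatr_eq0 => /eqP.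
move: k yk0; apply: ord5_cases; rewrite /y !pvecE => h0.
- exists (sgnpat_of (flips [::])); split.
  + by apply: lval_flips; rewrite sum_y /flips !in_nil h0; ring.
  + by apply: (@sgnpat_flips_neq _ _ j a); rewrite !inE !(eqxx, neqs).
  + by apply: (@sgnpat_flips_neq _ _ i a); rewrite !inE !(eqxx, neqs).
- exists (sgnpat_of (flips [::])); split.
  + by apply: lval_flips; rewrite sum_y /flips !in_nil h0; ring.
  + by apply: (@sgnpat_flips_neq _ _ j a); rewrite !inE !(eqxx, neqs).
  + by apply: (@sgnpat_flips_neq _ _ i a); rewrite !inE !(eqxx, neqs).
- exists (sgnpat_of (flips [:: j; a])); split.
  + by apply: lval_flips; rewrite sum_y /flips !inE !(eqxx, neqs) h0 /=; ring.
  + by apply: (@sgnpat_flips_neq _ _ a b); rewrite !inE !(eqxx, neqs).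
  + by apply: (@sgnpat_flips_neq _ _ i b); rewrite !inE !(eqxx, neqs).
- exists (sgnpat_of (flips [:: j; b])); split.
  + by apply: lval_flips; rewrite sum_y /flips !inE !(eqxx, neqs) h0 /=; ring.
  + by apply: (@sgnpat_flips_neq _ _ b a); rewrite !inE !(eqxx, neqs).
  + by apply: (@sgnpat_flips_neq _ _ i a); rewrite !inE !(eqxx, neqs).
- exists (sgnpat_of (flips [:: j; c])); split.
  + apply: lval_flips; rewrite sum_y /flips !inE !(eqxx, neqs) /=.
    have -> : s = - t by apply/eqP; rewrite -addr_eq0 -oppr_eq0 h0.
    by ring.
  + by apply: (@sgnpat_flips_neq _ _ c a); rewrite !inE !(eqxx, neqs).
  + by apply: (@sgnpat_flips_neq _ _ i a); rewrite !inE !(eqxx, neqs).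
Qed.

End ComponentToSingular.
End Complement.

Lemma Scomp_of_over_comp (v : pt6) y : v ord0 = 0 -> (forall k, xc v k = y k ^+ 2) ->
  over_comp y -> exists i j : 'I_5, (i < j)%N /\ Scomp i j v.
Proof.
move=> v0 hx [i [j [z [lt hz hzij hs]]]]; have hij : i != j by rewrite neq_ltn lt.
exists i, j; split=> //; split=> //; split; first by rewrite !hx -!hz.
move: hs; rewrite Scomp_quadE // sum_rest // !hx -!hz => /eqP; rewrite addrC addr_eq0 => /eqP ->.
by ring.
Qed.

Definition Scomp_quad (i j : 'I_5) : {mpoly algC[6]} :=
  \sum_(t < 5 | (t != i) && (t != j)) 'X_(lift ord0 t) ^+ 2
  - 2 * \sum_(s < 5 | (s != i) && (s != j))
          \sum_(t < 5 | [&& (s < t)%N, t != i & t != j]) 'X_(lift ord0 s) * 'X_(lift ord0 t).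

Lemma meval_Scomp_quad i j v : (Scomp_quad i j).@[v] =
  \sum_(t < 5 | (t != i) && (t != j)) xc v t ^+ 2
  - 2 * \sum_(s < 5 | (s != i) && (s != j))
          \sum_(t < 5 | [&& (s < t)%N, t != i & t != j]) xc v s * xc v t.
Proof.
rewrite /Scomp_quad rmorphB rmorphM /= rmorph_nat !rmorph_sum /=; congr (_ - _ * _).
  by apply: eq_bigr => t _; rewrite rmorphXn /= mevalXU.
apply: eq_bigr => s _; rewrite rmorph_sum /=; apply: eq_bigr => t _.
by rewrite rmorphM /= !mevalXU.
Qed.

Lemma Scomp_zclosed i j : zclosed (Scomp i j).
Proof.
exists (fun p => [\/ p = 'X_ord0, p = 'X_(lift ord0 i) - 'X_(lift ord0 j) | p = Scomp_quad i j]).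
move=> v; split=> [[v0 [xij hQ]] p [->|->|->]|h].
- by rewrite mevalXU.
- by rewrite mevalB !mevalXU; apply/eqP; rewrite subr_eq0; apply/eqP.
- by rewrite meval_Scomp_quad.
split; first by rewrite -(mevalXU v ord0); apply: h; apply: Or31.
split; last by rewrite -meval_Scomp_quad; apply: h; apply: Or33.
apply/eqP; rewrite -subr_eq0; apply/eqP.
by rewrite /xc -!(mevalXU v) -mevalB; apply: h; apply: Or32.
Qed.

Lemma horner_mmap (R : comNzRingType) (n : nat) (w : 'I_n -> {poly R}) p l :
  (mmap (@polyC R) w p).[l] = p.@[fun k => (w k).[l]].
Proof.
rewrite /mmap mevalE horner_sum; apply: eq_bigr => m _.
by rewrite hornerCM horner_prod; congr (_ * _); apply: eq_bigr => k _; rewrite horner_exp.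
Qed.

(* Restrict to the line through [u1] and [u2]: a nonzero univariate polynomial
   over an algebraically closed field has a non-root. *)
Lemma meval_neq0_common (F : closedFieldType) (m : nat) (q1 q2 : {mpoly F[m]}) u1 u2 :
  q1.@[u1] != 0 -> q2.@[u2] != 0 -> exists u, q1.@[u] != 0 /\ q2.@[u] != 0.
Proof.
move=> h1 h2; pose w k := (u1 k)%:P + (u2 k - u1 k) *: 'X.
pose line q := mmap (@polyC F) w q.
have line_val q l : (line q).[l] = q.@[fun k => u1 k + (u2 k - u1 k) * l].
  by rewrite horner_mmap; apply: meval_eq => k; rewrite hornerD hornerC hornerZ hornerX.
have e1 : (line q1).[0] = q1.@[u1] by rewrite line_val; apply: meval_eq => k; rewrite mulr0 addr0.
have e2 : (line q2).[1] = q2.@[u2] by rewrite line_val; apply: meval_eq => k; rewrite mulr1 subrKC.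
have nz1 : line q1 != 0 by apply: contraNneq h1 => e; rewrite -e1 e horner0.
have nz2 : line q2 != 0 by apply: contraNneq h2 => e; rewrite -e2 e horner0.
move: (mulf_neq0 nz1 nz2).
case/closed_nonrootP => l; rewrite /root hornerM mulf_eq0 negb_or !line_val => /andP[n1 n2].
by exists (fun k => u1 k + (u2 k - u1 k) * l).
Qed.

Lemma zirreducible_polymap (n m : nat) (A : ('I_n -> algC) -> Prop)
    (lq : n.-tuple {mpoly algC[m]}) :
  (forall v, A v <-> exists u, v =1 fun k => (tnth lq k).@[u]) -> zirreducible A.
Proof.
move=> hA; split; first by exists (fun k => (tnth lq k).@[fun=> 0]); apply/hA; exists (fun=> 0).
move=> Z1 Z2 [S1 hS1] [S2 hS2] hU.
case: (classic (forall v, A v -> Z1 v)) => [|nAZ1]; [by left | right].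
move=> v2 Av2; apply: NNPP => nZ2.
have [v1 [Av1 nZ1]] : exists v1, A v1 /\ ~ Z1 v1.
  apply: NNPP => hn; apply: nAZ1 => v Av; apply: NNPP => nZ; by case: hn; exists v.
have witness (Z : ('I_n -> algC) -> Prop) S v :
    (forall v, Z v <-> forall p, S p -> p.@[v] = 0) -> ~ Z v -> exists2 p, S p & p.@[v] != 0.
  move=> hS nZ; apply: NNPP => hn; apply/nZ/hS => p Sp.
  by apply/eqP; apply: contraT => np; case: hn; exists p.
have [p1 S1p1 np1] := witness _ _ _ hS1 nZ1.
have [p2 S2p2 np2] := witness _ _ _ hS2 nZ2.
have comp_val p u : (p \mPo lq).@[u] = p.@[fun k => (tnth lq k).@[u]] by rewrite comp_mpoly_meval.
have [u1 e1] := (hA v1).1 Av1; have [u2 e2] := (hA v2).1 Av2.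
have n1 : (p1 \mPo lq).@[u1] != 0 by rewrite comp_val -(meval_eq _ e1).
have n2 : (p2 \mPo lq).@[u2] != 0 by rewrite comp_val -(meval_eq _ e2).
have [u []] := meval_neq0_common n1 n2; rewrite !comp_val.
have Au : A (fun k => (tnth lq k).@[u]) by apply/hA; exists u.
by case: (hU _ Au) => [/hS1/(_ p1 S1p1) | /hS2/(_ p2 S2p2)] ->; rewrite eqxx.
Qed.

Lemma rmorph_param (R S : nzRingType) (f : {rmorphism R -> S}) i j (r s t : R) k :
  f (param i j r s t k) = param i j (f r) (f s) (f t) k.
Proof.
rewrite /param; case: unlift => [k'|]; last exact: rmorph0.
by rewrite (pvec_map f) !rmorphXn rmorphD.
Qed.

(* [S_(x_i,x_j)] is the image of affine 3-space under [(r, s, t) |-> param i j r s t]. *)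
Lemma Scomp_zirreducible i j : i != j -> zirreducible (Scomp i j).
Proof.
move=> hij; pose X k : {mpoly algC[3]} := 'X_k.
apply: (zirreducible_polymap (lq := [tuple param i j (X 0) (X 1) (X 2) k | k < 6])) => v.
have param_val u k : (tnth [tuple param i j (X 0) (X 1) (X 2) k | k < 6] k).@[u] =
    param i j (u 0) (u 1) (u 2) k.
  by rewrite tnth_mktuple rmorph_param /X /= !mevalXU.
rewrite ScompP //; split=> [[r [s [t hv]]]|[u hv]].
  by exists (fun k : 'I_3 => nth 0 [:: r; s; t] k) => k; rewrite hv param_val.
by exists (u 0), (u 1), (u 2) => k; rewrite hv param_val.
Qed.

Lemma pvec_probe :
  all (fun i : 'I_5 => all (fun j : 'I_5 => all (fun k : 'I_5 => all (fun l : 'I_5 =>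
  (i < j)%N ==> (k < l)%N ==> (pvec i j 0 1 4 9 k == pvec i j 0 1 4 9 l :> nat) ==>
  (k == i) && (l == j)) ord5) ord5) ord5) ord5.
Proof. by vm_compute. Qed.

(* The point with [x = (0, 0, 1, 4, 9)] (placed by [pvec]) lies on no other component. *)
Lemma Scomp_subset (i j k l : 'I_5) : (i < j)%N -> (k < l)%N ->
  (forall v, Scomp i j v -> Scomp k l v) -> i = k /\ j = l.
Proof.
move=> lt_ij lt_kl sub; have hij : i != j by rewrite neq_ltn lt_ij.
have [_ []] : Scomp k l (param i j 0 1 2) by apply/sub/(ScompP hij); exists 0, 1, 2.
have x_probe m : xc (param i j 0 1 2) m = (pvec i j 0 1 4 9 m)%:R.
  by rewrite xc_param (pvec_map (fun n : nat => n%:R : algC)); congr pvec; ring.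
rewrite !x_probe => /eqP; rewrite eqr_nat => x_kl _.
move/allP: pvec_probe => /(_ i (mem_ord5 i)) /allP /(_ j (mem_ord5 j)) /allP /(_ k (mem_ord5 k)).
by move/allP => /(_ l (mem_ord5 l)); rewrite lt_ij lt_kl x_kl /= => /andP[/eqP -> /eqP ->].
Qed.

Unset Implicit Arguments.
Set Strict Implicit.
Set Printing Implicit Defensive.

Theorem mainTheorem8 (D : {mpoly algC[5]}) (hD : is_Delta' D) :
  (forall v : pt6, SingCone D v <-> exists i j : 'I_5, (i < j)%N /\ Scomp i j v) /\
  (forall i j : 'I_5, (i < j)%N -> zclosed (Scomp i j) /\ zirreducible (Scomp i j)) /\
  (forall i j k l : 'I_5, (i < j)%N -> (k < l)%N ->
     (forall v, Scomp i j v -> Scomp k l v) -> i = k /\ j = l).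
Proof.
split; [move=> v; split | split=> [i j lt_ij|]; last exact: Scomp_subset].
- case/SingConeE => v0 hD0 hdD.
  apply: Scomp_of_over_comp v0 _ (over_comp_sqrt hD hD0 hdD) => k.
  by rewrite sqrtCK.
- case=> i [j [lt_ij hS]]; have hij : i != j by rewrite neq_ltn lt_ij.
  have [r [s [t hv]]] := (ScompP hij v).1 hS.
  exact: (Scomp_SingCone hij hD hv).
- have hij : i != j by rewrite neq_ltn lt_ij.
  by split; [apply: Scomp_zclosed | apply: Scomp_zirreducible].
Qed.
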